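(* For every forest $F$, the support of $\mathcal{M}_f(\cdot;F)$ is $A(F)$. Moreover, list the elements of $A=A(F)$ as $a_1,\dots,a_k$ in increasing order of progeny (so $a_k=r_1$). Then: (a) if $k=1$, $\mathcal{M}_f(r_1;F)=\frac12$; (b) if $k\ge2$, then $\mathcal{M}_f(a_i;F)=\frac12\log_2\frac{P(a_i)}{P(a_{i-1})}$ for all $1<i\le k$, and $\frac12\log_2\frac{2P(a_1)}{P^*}\le\mathcal{M}_f(a_1;F)\le\frac12$.
   Context: Let $N$ be a finite, totally ordered set of vertices. A directed forest on $N$ is a directed acyclic graph on $N$ with every out-degree at most $1$. For a forest $F$: roots are vertices with no out-edge; $T(x;F)$ is the subtree rooted at $x$ (vertices with a directed path to $x$, including $x$); $P(x)=P(x;F)=|T(x;F)|$; $P^*=\max_xP(x;F)$; $\underline{P}(x;F)=\max_{y\in T(x;F)\setminus\{x\}}P(y;F)$; $F_x$ is $F$ with the out-edge of $x$ removed (if any). Write $P(x)\succ P(y)$ iff $P(x)>P(y)$ or ($P(x)=P(y)$ and $x<y$); $r_1(F)$ is the root of $F$ maximal for $\succ$. $A(F)=\{x\in N:x=r_1(F_x)\}$ (this set forms a directed path in $F$ ending at $r_1$). The mechanism $\mathcal{M}_f$: on roots, $\mathcal{M}_f(r_1(F);F)=1/2$ if $|A(F)|=1$, $=\frac12\log_2\frac{P(r_1)}{\underline{P}(r_1)}$ if $|A(F)|\ge2$, and $\mathcal{M}_f(r;F)=0$ for all other roots $r$; on a non-root $x$, $\mathcal{M}_f(x;F)=\mathcal{M}_f(x;F_x)$.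 *)

From mathcomp Require Import all_boot.
From Stdlib Require Import Reals.
Set Implicit Arguments.
Unset Strict Implicit.
Unset Printing Implicit Defensive.

(* The finite totally ordered vertex set N is 'I_n with its natural order.
   A directed graph with out-degree <= 1 is a parent map F : 'I_n -> option 'I_n
   (F x = Some y  iff  x -> y is the out-edge of x). *)
Definition graph (n : nat) := {ffun 'I_n -> option 'I_n}.

Definition step n (F : graph n) (o : option 'I_n) : option 'I_n :=
  if o is Some v then F v else None.

(* acyclic: following out-edges from any vertex, one reaches a root within n steps *)
Definition is_forest n (F : graph n) : Prop :=
  forall x : 'I_n, iter n (step F) (Some x) = None.

(* y is in T(x;F): there is a directed path (of length k <= n) from y to x *)
Definition inT n (F : graph n) (x y : 'I_n) : bool :=
  [exists k : 'I_n.+1, iter k (step F) (Some y) == Some x].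

Definition P n (F : graph n) (x : 'I_n) : nat := #|[set y | inT F x y]|.

Definition Pstar n (F : graph n) : nat := \max_(x : 'I_n) P F x.

(* underline P(x;F) = max over y in T(x;F)\{x} of P(y;F)  (0 if that set is empty) *)
Definition Pbar n (F : graph n) (x : 'I_n) : nat :=
  \max_(y : 'I_n | inT F x y && (y != x)) P F y.

Definition remove n (F : graph n) (x : 'I_n) : graph n :=
  [ffun y => if y == x then None else F y].

Definition is_root n (F : graph n) (x : 'I_n) : bool := F x == None.

Definition succ_pref n (F : graph n) (x y : 'I_n) : bool :=
  (P F y < P F x) || ((P F x == P F y) && (x < y)).

(* r_1(F): the root maximal for the order above (None only when N is empty) *)
Definition r1 n (F : graph n) : option 'I_n :=
  [pick r | is_root F r && [forall s, (is_root F s && (s != r)) ==> succ_pref F r s]].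

Definition Aset n (F : graph n) : {set 'I_n} := [set x | r1 (remove F x) == Some x].

Definition log2 (t : R) : R := (ln t / ln 2)%R.

Definition M_root n (G : graph n) (r : 'I_n) : R :=
  if r1 G == Some r then
    (if #|Aset G| == 1 then (/2)%R
     else (/2 * log2 (INR (P G r) / INR (Pbar G r)))%R)
  else 0%R.

(* M_f(x;F): for roots, M_root; for non-roots, M_f(x;F_x) where x is a root of F_x.
   Since F_x = F when x is a root, uniformly M_f(x;F) = M_root F_x x. *)
Definition Mf n (F : graph n) (x : 'I_n) : R := M_root (remove F x) x.

(* The subtree order of a forest is a partial order whose sets of ancestors are chains, and
   P strictly decreases along it. Deleting the out-edge of y detaches T(y): the progeny of
   each proper ancestor of y drops by P(y) and nothing else changes.
   An element y of A(F) must beat the rest of its own tree once T(y) is detached, so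
   P(r1) <= 2 P(y). Since every element of A(F) lies below r1, this makes A(F) a chain closed
   under ancestors, and it makes the largest subtree strictly below a_i (i > 1) equal to
   T(a_(i-1)): any other one is inside T(a_(i-1)) or disjoint from it, hence of size at most
   P(r1) - P(a_(i-1)) <= P(a_(i-1)). Applied in F_x, the same bound gives P(x) <= 2 P̲(x),
   i.e. M_f <= 1/2. Below a_1 nothing lies in A(F), so for a proper descendant d of a_1
   either the root of its tree beats d in F_d, giving 2 P(d) <= P^*, or another root t
   does; then the second element of A(F_(a_1)), which has at most half the progeny of the
   tree of a_1, beats t and hence d, and again 2 P(d) <= P^*. *)

From mathcomp Require Import all_boot zify.
From Stdlib Require Import Reals Lra.

Set Implicit Arguments.
Unset Strict Implicit.
Unset Printing Implicit Defensive.

Lemma card_gt1_other (T : finType) (S : {set T}) x : x \in S ->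
  reflect (exists2 y, y \in S & y != x) (1 < #|S|).
Proof.
move=> Sx; rewrite (cardsD1 x) Sx add1n ltnS card_gt0.
apply: (iffP (set0Pn _)) => [[y]|[y Sy yx]]; last by exists y; rewrite !inE yx.
by rewrite !inE => /andP[yx Sy]; exists y.
Qed.

Lemma sorted_onth_leq (T : Type) (f : T -> nat) (s : seq T) i j a b :
  sorted (fun x y => f x <= f y) s -> i <= j ->
  onth s i = Some a -> onth s j = Some b -> f a <= f b.
Proof.
move=> s_sorted ij sa sb; have js : j < size s by rewrite -onthTE sb.
rewrite -(onth_nth a _ _ _ sa) -(onth_nth a _ _ _ sb).
have f_trans : transitive (fun x y => f x <= f y) by move=> ? ? ?; apply: leq_trans.
have := sorted_leq_nth f_trans (fun _ => leqnn _) a s_sorted.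
by apply; rewrite ?inE ?(leq_ltn_trans ij).
Qed.

Lemma onth_uniq_neq (T : eqType) (s : seq T) i j a b : uniq s -> i != j ->
  onth s i = Some a -> onth s j = Some b -> a != b.
Proof.
move=> s_uniq ij sa sb; apply: contra ij => /eqP ab.
have js : j < size s by rewrite -onthTE sb.
by apply/eqP/(onth_inj s i j s_uniq (leq_ltn_trans (geq_minl _ _) js)); rewrite sa sb ab.
Qed.

Lemma onth_last (T : Type) (s : seq T) j a : onth s j = Some a ->
  exists b, onth s (size s).-1 = Some b /\ j <= (size s).-1.
Proof.
move=> sj; have js : j < size s by rewrite -onthTE sj.
case sl: (onth s (size s).-1) => [b|]; first by exists b; split=> //; lia.
by move: (onthTE s (size s).-1); rewrite sl => /esym/negbT; rewrite -leqNgt; lia.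
Qed.

Section Log2.
Local Open Scope R_scope.

Lemma log2_le u v : 0 < u -> u <= v -> log2 u <= log2 v.
Proof.
move=> u_gt0 uv; rewrite /log2; apply: Rmult_le_compat_r.
  by apply/Rlt_le/Rinv_0_lt_compat; have := ln_lt_2; lra.
by case: (Rle_lt_or_eq_dec _ _ uv) => [/(ln_increasing _ _ u_gt0)|->]; lra.
Qed.

Lemma log2_gt0 u : 1 < u -> 0 < log2 u.
Proof.
move=> u_gt1; rewrite /log2; apply: Rdiv_lt_0_compat; last by have := ln_lt_2; lra.
by rewrite -ln_1; apply: ln_increasing; lra.
Qed.

Lemma log2_2 : log2 2 = 1.
Proof. have := ln_lt_2; rewrite /log2 => ln2_gt0; field; lra. Qed.

Lemma half_log2_ratio_gt0 (p q : nat) : (0 < q < p)%nat -> 0 < /2 * log2 (INR p / INR q).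
Proof.
move=> /andP[/ltP/lt_INR q_gt0 /ltP/lt_INR qp]; rewrite /= in q_gt0.
apply: Rmult_lt_0_compat; first lra.
apply: log2_gt0; apply: (Rmult_lt_reg_r (INR q)) => //.
by rewrite Rmult_1_l /Rdiv Rmult_assoc Rinv_l; lra.
Qed.

Lemma half_log2_ratio_le (p q p' q' : nat) : (0 < p)%nat -> (0 < q)%nat -> (0 < q')%nat ->
  (p * q' <= p' * q)%nat -> /2 * log2 (INR p / INR q) <= /2 * log2 (INR p' / INR q').
Proof.
move=> /ltP/lt_INR p_gt0 /ltP/lt_INR q_gt0 /ltP/lt_INR q'_gt0 /leP/le_INR.
rewrite !mult_INR /= in p_gt0 q_gt0 q'_gt0 * => pq.
apply: Rmult_le_compat_l; first lra.
apply: log2_le; first exact: Rdiv_lt_0_compat.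
apply: (Rmult_le_reg_r (INR q * INR q')); first nra.
by field_simplify; lra.
Qed.

Lemma half_log2_ratio_le_half (p q : nat) :
  (0 < p)%nat -> (0 < q)%nat -> (p <= 2 * q)%nat -> /2 * log2 (INR p / INR q) <= /2.
Proof.
move=> p_gt0 q_gt0 pq.
have := half_log2_ratio_le (p' := 2) p_gt0 q_gt0 (isT : (0 < 1)%nat).
rewrite muln1 => /(_ pq); rewrite (_ : INR 2 / INR 1 = 2) ?log2_2; first lra.
by rewrite /=; field.
Qed.

End Log2.

Section Forest.
Variables (n : nat) (F : graph n).
Hypothesis HF : is_forest F.
Implicit Types x y z r t : 'I_n.

Definition ancestor k z := iter k (step F) (Some z).

Lemma iter_step_None k : iter k (step F) None = None.
Proof. by elim: k => //= k ->. Qed.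

Lemma ancestorD j k z : ancestor (j + k) z = iter j (step F) (ancestor k z).
Proof. exact: iterD. Qed.

Lemma ancestor_ge k z : n <= k -> ancestor k z = None.
Proof. by move=> /subnK <-; rewrite ancestorD /ancestor HF iter_step_None. Qed.

Lemma inTP x z : reflect (exists k, ancestor k z = Some x) (inT F x z).
Proof.
apply: (iffP existsP) => [[k /eqP]|[k zx]]; first by exists k.
case: (ltnP k n.+1) => [kn|/ltnW/(ancestor_ge z)]; last by rewrite zx.
by exists (Ordinal kn); apply/eqP.
Qed.

Lemma ancestor_inj z x i j : ancestor i z = Some x -> ancestor j z = Some x -> i = j.
Proof.
wlog ij : i j / i <= j => [wlog_ij|zi zj].
  by case: (leqP i j) => [|/ltnW] ij zi zj; [|symmetry]; apply: wlog_ij.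
have loop : ancestor (j - i) x = Some x by move: zj; rewrite -{1}(subnK ij) ancestorD zi.
have loop_m m : ancestor (m * (j - i)) x = Some x.
  by elim: m => // m IH; rewrite mulSn ancestorD IH.
apply/eqP; rewrite eqn_leq ij leqNgt -subn_gt0; apply/negP => ji.
by move: (loop_m n); rewrite ancestor_ge // leq_pmulr.
Qed.

Lemma inT_refl x : inT F x x.
Proof. by apply/existsP; exists ord0. Qed.

Lemma inT_trans x y z : inT F x y -> inT F y z -> inT F x z.
Proof.
move=> /inTP[a ya] /inTP[b zb]; apply/inTP; exists (a + b).
by rewrite ancestorD zb.
Qed.

Lemma inT_anti x y : inT F x y -> inT F y x -> x = y.
Proof.
move=> /inTP[a ya] /inTP[b xb].
have xx : ancestor (a + b) x = Some x by rewrite ancestorD xb.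
have /eqP := ancestor_inj xx (erefl : ancestor 0 x = Some x).
by rewrite addn_eq0 => /andP[/eqP a0 _]; move: ya; rewrite a0 => -[].
Qed.

Lemma inT_total x y z : inT F x z -> inT F y z -> inT F x y \/ inT F y x.
Proof.
move=> /inTP[a za] /inTP[b zb]; case: (leqP a b) => [|/ltnW] ab; [right|left].
  by apply/inTP; exists (b - a); move: zb; rewrite -{1}(subnK ab) ancestorD za.
by apply/inTP; exists (a - b); move: za; rewrite -{1}(subnK ab) ancestorD zb.
Qed.

Lemma root_inT r y : is_root F r -> inT F y r -> y = r.
Proof.
move=> /eqP r_root /inTP[[[]//|k]].
by rewrite /ancestor iterSr /= r_root iter_step_None.
Qed.

Lemma root_exists z : exists2 r, is_root F r & inT F r z.
Proof.
suff: forall k, ancestor k z = None -> exists2 r, is_root F r & inT F r z.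
  by apply; apply: HF.
elim=> // k IH; rewrite /ancestor iterS -/(ancestor k z).
case zk: (ancestor k z) => [w|] /= wroot; last exact: IH.
by exists w; [apply/eqP | apply/inTP; exists k].
Qed.

Lemma roots_eq t r z : is_root F t -> is_root F r -> inT F t z -> inT F r z -> t = r.
Proof.
move=> troot rroot tz rz.
by case: (inT_total tz rz) => [/(root_inT rroot)|/(root_inT troot)].
Qed.

Lemma P_gt0 x : 0 < P F x.
Proof. by apply/card_gt0P; exists x; rewrite inE inT_refl. Qed.

Lemma subset_subtree x y : inT F x y -> [set z | inT F y z] \subset [set z | inT F x z].
Proof. by move=> xy; apply/subsetP => z; rewrite !inE; apply: inT_trans. Qed.

Lemma leq_P_inT x y : inT F x y -> P F y <= P F x.
Proof. by move/subset_subtree/subset_leq_card. Qed.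

Lemma ltn_P_inT x y : inT F x y -> y != x -> P F y < P F x.
Proof.
move=> xy yx; apply/proper_card/properP; split; first exact: subset_subtree.
exists x; rewrite !inE ?inT_refl //.
by apply: contra yx => /(inT_anti xy) ->.
Qed.

Lemma P_disjoint r x y : ~~ inT F x y -> ~~ inT F y x -> inT F r x -> inT F r y ->
  P F x + P F y < P F r.
Proof.
move=> xy yx rx ry.
have disj : [disjoint [set z | inT F x z] & [set z | inT F y z]].
  apply/pred0P => z; rewrite /= !inE; apply/negP => /andP[xz yz].
  by case: (inT_total xz yz); apply/negP.
have -> : P F x + P F y = #|[set z | inT F x z] :|: [set z | inT F y z]|.
  by rewrite cardsU (disjoint_setI0 disj) cards0 subn0.
apply/proper_card/properP; split.
  by rewrite subUset !subset_subtree.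
exists r; rewrite !inE ?inT_refl //; apply/negP => /orP[xr|yr].
  by rewrite -(inT_anti rx xr) ry in xy.
by rewrite -(inT_anti ry yr) rx in yx.
Qed.

Lemma leq_P_Pbar x y : inT F x y -> y != x -> P F y <= Pbar F x.
Proof. by move=> xy yx; apply: leq_bigmax_cond; rewrite xy yx. Qed.

Lemma Pbar_lt_P x : Pbar F x < P F x.
Proof.
rewrite -(prednK (P_gt0 x)) ltnS; apply/bigmax_leqP => y /andP[xy yx].
by rewrite -ltnS prednK ?P_gt0 ?ltn_P_inT.
Qed.

End Forest.

Section Remove.
Variables (n : nat) (F : graph n).
Implicit Types x y z r t : 'I_n.

Lemma removeE y w : remove F y w = if w == y then None else F w.
Proof. by rewrite ffunE. Qed.

Lemma is_root_remove y t : is_root (remove F y) t = (t == y) || is_root F t.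
Proof. by rewrite /is_root removeE; case: (t == y). Qed.

Lemma remove_root r : is_root F r -> remove F r = F.
Proof. by move=> /eqP r_root; apply/ffunP => w; rewrite ffunE; case: eqP => // ->. Qed.

Lemma removeC x y : remove (remove F x) y = remove (remove F y) x.
Proof. by apply/ffunP => w; rewrite !ffunE; case: (w == y); case: (w == x). Qed.

Lemma ancestor_remove y k z x : ancestor (remove F y) k z = Some x ->
  ancestor F k z = Some x /\ forall j, j < k -> ancestor F j z <> Some y.
Proof.
elim: k x => [|k IH] x; first by split.
rewrite /ancestor !iterS -!/(ancestor _ k z).
case zk: (ancestor (remove F y) k z) => [w|] //=; rewrite removeE.
case: eqP => // wy wx; have [zk' avoid_y] := IH _ zk; split; first by rewrite zk'.
move=> j; rewrite ltnS leq_eqVlt => /orP[/eqP ->|/avoid_y //].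
by rewrite -/(ancestor F k z) zk' => -[].
Qed.

Lemma ancestor_remove_avoid y k z : (forall j, j < k -> ancestor F j z <> Some y) ->
  ancestor (remove F y) k z = ancestor F k z.
Proof.
elim: k => // k IH avoid_y.
rewrite /ancestor !iterS -!/(ancestor _ k z) IH => [|j /ltnW]; last exact: avoid_y.
case zk: (ancestor F k z) => [w|] //=; rewrite removeE.
by case: eqP => // wy; case: (avoid_y k) => //; rewrite zk wy.
Qed.

Hypothesis HF : is_forest F.

Lemma remove_forest y : is_forest (remove F y).
Proof.
move=> x; case zn: (ancestor (remove F y) n x) => [w|] //.
by have [] := ancestor_remove zn; rewrite /ancestor HF.
Qed.

Lemma inT_remove y x z :
  inT (remove F y) x z = inT F x z && ~~ [&& inT F y z, inT F x y & y != x].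
Proof.
apply/idP/andP => [/(inTP (remove_forest y))[k /ancestor_remove[zk avoid_y]]|].
  split; first by apply/(inTP HF); exists k.
  apply/and3P => -[/(inTP HF)[a za] /(inTP HF)[b yb] yx].
  have kba : k = b + a by apply: (ancestor_inj HF zk); rewrite ancestorD za.
  apply: (avoid_y a _ za); rewrite kba -{1}[a]add0n ltn_add2r lt0n.
  by apply: contra yx => /eqP b0; move: yb; rewrite b0 => -[->].
move=> [/(inTP HF)[k zk] not_via_y]; apply/(inTP (remove_forest y)); exists k.
rewrite ancestor_remove_avoid // => j jk zj; apply/negP: not_via_y; rewrite negbK.
apply/and3P; split; first by apply/(inTP HF); exists j.
  by apply/(inTP HF); exists (k - j); move: zk; rewrite -{1}(subnK (ltnW jk)) ancestorD zj.
apply: contraTneq jk => yx; rewrite -leqNgt; subst y.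
by rewrite (ancestor_inj HF zk zj).
Qed.

Lemma inT_removeW y x z : inT (remove F y) x z -> inT F x z.
Proof. by rewrite inT_remove => /andP[]. Qed.

Lemma P_remove y x :
  P (remove F y) x = if inT F x y && (y != x) then P F x - P F y else P F x.
Proof.
rewrite /P; case: ifP => [/andP[xy yx]|below_y].
  rewrite -(setIidPr (subset_subtree HF xy)) -cardsD.
  by apply: eq_card => z; rewrite !inE inT_remove xy yx !andbT andbC.
by apply: eq_card => z; rewrite !inE inT_remove below_y andbF andbT.
Qed.

Lemma P_remove_self x : P (remove F x) x = P F x.
Proof. by rewrite P_remove eqxx andbF. Qed.

Lemma P_remove_not_inT y x : ~~ inT F x y -> P (remove F y) x = P F x.
Proof. by move=> /negbTE xy; rewrite P_remove xy. Qed.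

Lemma P_remove_inT y x : inT F y x -> P (remove F y) x = P F x.
Proof.
move=> yx; rewrite P_remove; case: ifP => // /andP[xy].
by rewrite (inT_anti HF xy yx) eqxx.
Qed.

Lemma leq_P_remove y x : P (remove F y) x <= P F x.
Proof. by rewrite P_remove; case: ifP => //; rewrite leq_subr. Qed.

Lemma Pbar_remove_self x : Pbar (remove F x) x = Pbar F x.
Proof.
apply: eq_big => [y|y /andP[xy _]]; first by rewrite inT_remove eqxx !andbF andbT.
by rewrite P_remove_inT // (inT_removeW xy).
Qed.

End Remove.

Definition lex_pref (p x q y : nat) : Prop := q < p \/ (p = q /\ x < y).

Lemma lex_pref_leq p x q y : lex_pref p x q y -> q <= p.
Proof. by case=> [/ltnW|[->]]. Qed.

Lemma lex_pref_asym p x q y : lex_pref p x q y -> lex_pref q y p x -> False.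
Proof. rewrite /lex_pref; lia. Qed.

Lemma lex_prefWr p x q q' y : q' <= q -> lex_pref p x q y -> lex_pref p x q' y.
Proof. rewrite /lex_pref; lia. Qed.

Section Preference.
Variables (n : nat) (F : graph n).
Implicit Types x y z r t : 'I_n.

Lemma succ_prefE x y : succ_pref F x y <-> lex_pref (P F x) x (P F y) y.
Proof.
rewrite /succ_pref /lex_pref; split.
  by case/orP => [->|/andP[/eqP -> ->]]; [left|right].
by case=> [->|[-> ->]] //; rewrite eqxx orbT.
Qed.

Lemma r1P r : r1 F = Some r <->
  is_root F r /\ forall t, is_root F t -> t != r -> lex_pref (P F r) r (P F t) t.
Proof.
rewrite /r1; case: pickP => [r' /andP[r'_root /forallP r'_max]|no_r1].
  split=> [[<-]|[r_root r_max]].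
    by split=> // t t_root tr'; apply/succ_prefE; move: (r'_max t); rewrite t_root tr'.
  case: (eqVneq r' r) => [-> //|r'r]; have := r_max r' r'_root r'r.
  have := r'_max r; rewrite r_root eq_sym r'r => /succ_prefE.
  by rewrite /lex_pref; lia.
split=> // -[r_root r_max]; move: (no_r1 r); rewrite /= r_root /=.
move=> /negbT/negP; case; apply/forallP => t; apply/implyP => /andP[t_root tr].
exact/succ_prefE/r_max.
Qed.

Lemma r1_exists (HF : is_forest F) z : exists r, r1 F = Some r.
Proof.
have [r0 r0_root _] := root_exists HF z.
(* Maximising [key] maximises P and, among equal values of P, minimises the index. *)
pose key t := P F t * n.+1 + (n - t).
have [r r_root r_max] := arg_maxnP key r0_root.
exists r; apply/r1P; split=> // t t_root tr; have := r_max t t_root.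
have := ltn_ord t; have := ltn_ord r; have : (t : nat) != r by [].
rewrite /key /lex_pref; nia.
Qed.

End Preference.

Section Aset.
Variables (n : nat) (F : graph n).
Hypothesis HF : is_forest F.
Implicit Types x y z d r t : 'I_n.

Lemma r1_Aset r : r1 F = Some r -> r \in Aset F.
Proof.
move=> r1r; have [r_root _] := (r1P F r).1 r1r.
by rewrite inE remove_root // r1r.
Qed.

Lemma AsetP y : y \in Aset F <->
  forall t, is_root (remove F y) t -> t != y ->
    lex_pref (P F y) y (P (remove F y) t) t.
Proof.
rewrite inE; split=> [/eqP/r1P[_ y_max] t|y_max].
  by rewrite -(P_remove_self HF); apply: y_max.
by apply/eqP/r1P; rewrite is_root_remove eqxx P_remove_self.
Qed.

Lemma Aset_pref_root y t : y \in Aset F -> is_root F t -> ~~ inT F t y ->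
  lex_pref (P F y) y (P F t) t.
Proof.
move=> /AsetP y_max t_root ty; rewrite -(P_remove_not_inT HF ty).
apply: y_max; first by rewrite is_root_remove t_root orbT.
by apply: contraNneq ty => ->; apply: inT_refl.
Qed.

Lemma inT_r1_Aset r y : r1 F = Some r -> y \in Aset F -> inT F r y.
Proof.
move=> r1r yA; have [r_root r_max] := (r1P F r).1 r1r.
have [rho rho_root rho_y] := root_exists HF y.
have [<- //|rho_r] := eqVneq rho r.
have [y_rho|y_rho] := eqVneq y rho.
  move: yA; rewrite inE y_rho remove_root // r1r => /eqP[r_rho].
  by rewrite r_rho eqxx in rho_r.
have ry : ~~ inT F r y.
  by apply: contra rho_r => ry; rewrite (roots_eq HF rho_root r_root rho_y ry).
have := Aset_pref_root yA r_root ry; have := r_max rho rho_root rho_r.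
by have := ltn_P_inT HF rho_y y_rho; rewrite /lex_pref; lia.
Qed.

Lemma Aset_P_double r y : r1 F = Some r -> y \in Aset F -> P F r <= 2 * P F y.
Proof.
move=> r1r yA; have ry := inT_r1_Aset r1r yA.
have [<-|yr] := eqVneq y r; first by rewrite leq_pmull.
have [r_root _] := (r1P F r).1 r1r.
have := (AsetP y).1 yA r; rewrite is_root_remove r_root orbT eq_sym yr => /(_ isT isT).
by rewrite P_remove // ry yr /lex_pref /=; lia.
Qed.

Lemma Aset_total x y : x \in Aset F -> y \in Aset F -> inT F x y \/ inT F y x.
Proof.
move=> xA yA; have [r r1r] := r1_exists HF x.
case xy: (inT F x y); first by left.
case yx: (inT F y x); first by right.
have := P_disjoint HF (negbT xy) (negbT yx) (inT_r1_Aset r1r xA) (inT_r1_Aset r1r yA).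
by have := Aset_P_double r1r xA; have := Aset_P_double r1r yA; lia.
Qed.

Lemma Aset_P_max r y : r1 F = Some r -> y \in Aset F -> P F r <= P F y -> y = r.
Proof.
move=> r1r yA; apply: contraTeq => yr; rewrite -ltnNge.
exact: (ltn_P_inT HF (inT_r1_Aset r1r yA) yr).
Qed.

Lemma Aset_inT x y : x \in Aset F -> y \in Aset F -> P F y <= P F x -> inT F x y.
Proof.
move=> xA yA yx; case: (Aset_total xA yA) => // xy.
have [<-|xy'] := eqVneq x y; first exact: inT_refl.
by move: yx; rewrite leqNgt ltn_P_inT.
Qed.

Lemma Aset_ancestor y d : y \in Aset F -> inT F d y -> d \in Aset F.
Proof.
move=> yA dy; have [<- //|yd] := eqVneq y d.
have [r r1r] := r1_exists HF y; have [r_root _] := (r1P F r).1 r1r.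
have ry := inT_r1_Aset r1r yA; have Pyd := ltn_P_inT HF dy yd.
have r_dbl := Aset_P_double r1r yA.
apply/AsetP => t; rewrite is_root_remove => /orP[/eqP -> /eqP //|t_root td]; left.
have [tr|tr] := eqVneq t r.
  subst t; have rd : inT F r d.
    by case: (inT_total HF ry dy) => // /(root_inT HF r_root) dr; rewrite dr eqxx in td.
  by rewrite P_remove // rd eq_sym td /=; lia.
have ty : ~~ inT F t y.
  by apply: contra tr => ty; apply/eqP/(roots_eq HF t_root r_root ty ry).
have := Aset_pref_root yA t_root ty.
have td' : ~~ inT F t d := contra (fun td => inT_trans HF td dy) ty.
by rewrite (P_remove_not_inT HF td') => /lex_pref_leq/leq_ltn_trans; apply.
Qed.

Lemma notin_Aset_pref rho d : is_root F rho -> inT F rho d -> d \notin Aset F ->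
  2 * P F d <= P F rho \/
  exists t, [/\ is_root F t, t != rho & lex_pref (P F t) t (P F d) d].
Proof.
move=> rho_root rho_d dA; have [r' r1r'] := r1_exists (remove_forest HF d) d.
have r'd : r' != d by apply: contraNneq dA => r'd; rewrite inE r1r' r'd.
have [r'_root' r'_max] := (r1P _ r').1 r1r'.
have r'_root : is_root F r' by rewrite is_root_remove (negbTE r'd) in r'_root'.
have dr' : d != r' by rewrite eq_sym.
have := r'_max d; rewrite is_root_remove eqxx (P_remove_self HF) => /(_ isT dr').
have [r'rho|r'rho] := eqVneq r' rho.
  subst r'; rewrite (P_remove HF) rho_d dr' /lex_pref /=; left; lia.
have r'_d : ~~ inT F r' d.
  by apply: contra r'rho => r'_d; rewrite (roots_eq HF r'_root rho_root r'_d rho_d).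
by rewrite (P_remove_not_inT HF r'_d) => pref; right; exists r'; split.
Qed.

End Aset.

Section Mechanism.
Variables (n : nat) (F : graph n).
Hypothesis HF : is_forest F.
Implicit Types a b d x y r : 'I_n.

Lemma Aset_remove_self x : x \in Aset F -> x \in Aset (remove F x).
Proof. by rewrite [_ \in Aset F]inE => /eqP/r1_Aset. Qed.

Lemma Aset_remove x y : x \in Aset F -> y \in Aset F -> inT F x y ->
  y \in Aset (remove F x).
Proof.
move=> xA yA xy; have [->|yx] := eqVneq y x; first exact: Aset_remove_self.
have Fx := remove_forest HF x; have Pyx := ltn_P_inT HF xy yx.
have [r r1r] := r1_exists HF x; have [r_root _] := (r1P F r).1 r1r.
have rx := inT_r1_Aset HF r1r xA.
have yr : y != r by apply: contraNneq yx => yr; apply/eqP/esym/(inT_anti HF xy); rewrite yr.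
have /(AsetP HF y).1 y_max := yA.
apply/(AsetP Fx) => t; rewrite (P_remove_inT HF xy) !is_root_remove.
case/or3P=> [/eqP -> /eqP //|/eqP ->{t} _|t_root ty].
  have := y_max r; rewrite is_root_remove r_root orbT eq_sym yr => /(_ isT isT).
  rewrite (P_remove HF) (inT_trans HF rx xy) yr /=.
  rewrite (P_remove Fx) (inT_remove HF) xy inT_refl eqxx yx /=.
  rewrite (P_remove_self HF) (P_remove_inT HF xy) /lex_pref.
  have [<- //|xr] := eqVneq x r; have := ltn_P_inT HF rx xr; lia.
have := y_max t; rewrite is_root_remove t_root orbT => /(_ isT ty) /lex_prefWr; apply.
by rewrite removeC (leq_P_remove (remove_forest HF y)).
Qed.

Lemma Mf_notin x : x \notin Aset F -> Mf F x = 0%R.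
Proof. by rewrite /Mf /M_root inE => /negbTE ->. Qed.

Lemma Mf_Aset x : x \in Aset F -> Mf F x =
  if 1 < #|Aset (remove F x)| then (/2 * log2 (INR (P F x) / INR (Pbar F x)))%R
  else (/2)%R.
Proof.
move=> xA; have /card_gt0P c_gt0 : exists y, y \in Aset (remove F x).
  by exists x; apply: Aset_remove_self.
move: xA; rewrite /Mf /M_root inE => /eqP ->; rewrite eqxx ltn_neqAle c_gt0 andbT.
by rewrite eq_sym (P_remove_self HF) (Pbar_remove_self HF); case: eqP.
Qed.

Lemma Aset_remove_inT x y : x \in Aset F -> y \in Aset (remove F x) -> inT F x y.
Proof.
rewrite inE => /eqP r1x yA.
exact: (inT_removeW HF (inT_r1_Aset (remove_forest HF x) r1x yA)).
Qed.

Lemma Pbar_Aset_remove x y : x \in Aset F -> y \in Aset (remove F x) -> y != x ->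
  0 < Pbar F x /\ P F x <= 2 * Pbar F x.
Proof.
move=> xA yA yx; have xy := Aset_remove_inT xA yA.
have yPbar := leq_P_Pbar xy yx; split; first exact: leq_trans (P_gt0 F y) yPbar.
move: xA; rewrite inE => /eqP r1x.
have := Aset_P_double (remove_forest HF x) r1x yA.
by rewrite (P_remove_self HF) (P_remove_inT HF xy); lia.
Qed.

Lemma Mf_neq0 x : Mf F x <> 0%R <-> x \in Aset F.
Proof.
have [xA|/Mf_notin -> //] := boolP (x \in Aset F); split=> // _.
rewrite Mf_Aset //; case: (card_gt1_other (Aset_remove_self xA)) => [[y yA yx]|_].
  have [Pbar_gt0 _] := Pbar_Aset_remove xA yA yx.
  by apply/Rgt_not_eq/half_log2_ratio_gt0; rewrite Pbar_gt0 Pbar_lt_P.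
lra.
Qed.

Lemma Mf_le_half x : (Mf F x <= /2)%R.
Proof.
have [xA|/Mf_notin ->] := boolP (x \in Aset F); last lra.
rewrite Mf_Aset //; case: (card_gt1_other (Aset_remove_self xA)) => [[y yA yx]|_].
  have [Pbar_gt0 PPbar] := Pbar_Aset_remove xA yA yx.
  exact: half_log2_ratio_le_half (P_gt0 F x) Pbar_gt0 PPbar.
lra.
Qed.

Lemma Pbar_Aset_step a b : a \in Aset F -> b \in Aset F -> inT F a b -> b != a ->
  (forall d, d \in Aset F -> P F d <= P F b \/ P F a <= P F d) ->
  Pbar F a = P F b.
Proof.
move=> aA bA ab ba gap; apply/eqP; rewrite eqn_leq leq_P_Pbar // andbT.
apply/bigmax_leqP => d /andP[ad da].
have [bd|bd] := boolP (inT F b d); first exact: (leq_P_inT HF bd).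
have [db|db] := boolP (inT F d b).
  case: (gap d (Aset_ancestor HF bA db)) => // /leq_ltn_trans/(_ (ltn_P_inT HF ad da)).
  by rewrite ltnn.
have [r r1r] := r1_exists HF a; have ra := inT_r1_Aset HF r1r aA.
have := P_disjoint HF db bd (inT_trans HF ra ad) (inT_trans HF ra ab).
move=> /ltnW/leq_trans/(_ (Aset_P_double HF r1r bA)).
by rewrite mul2n -addnn leq_add2r.
Qed.

Lemma Pbar_Aset_min a y : a \in Aset F -> (forall d, d \in Aset F -> P F a <= P F d) ->
  y \in Aset (remove F a) -> y != a -> 2 * Pbar F a <= Pstar F.
Proof.
move=> aA a_min yA ya; have ay := Aset_remove_inT aA yA.
have [rho rho_root rho_a] := root_exists HF a; have rho_y := inT_trans HF rho_a ay.
have below_notin d : inT F a d -> d != a -> d \notin Aset F.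
  by move=> ad da; apply: contraTN (ltn_P_inT HF ad da) => /a_min; rewrite -leqNgt.
have y_pref t : is_root F t -> t != rho -> lex_pref (P F y) y (P F t) t.
  move=> t_root t_rho.
  have ta : ~~ inT F t a.
    by apply: contra t_rho => ta; rewrite (roots_eq HF t_root rho_root ta rho_a).
  have ty : ~~ inT (remove F a) t y.
    apply: contra t_rho => /(inT_removeW HF) ty.
    by rewrite (roots_eq HF t_root rho_root ty rho_y).
  have t_root' : is_root (remove F a) t by rewrite is_root_remove t_root orbT.
  move: (Aset_pref_root (remove_forest HF a) yA t_root' ty).
  by rewrite (P_remove_inT HF ay) (P_remove_not_inT HF ta).
have y_half : 2 * P F y <= P F rho.
  case: (notin_Aset_pref HF rho_root rho_y (below_notin y ay ya)) => // -[t [t_root t_rho]].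
  by move=> /lex_pref_asym/(_ (y_pref t t_root t_rho)).
have d_half d : inT F a d -> d != a -> 2 * P F d <= P F rho.
  move=> ad da; have rho_d := inT_trans HF rho_a ad.
  case: (notin_Aset_pref HF rho_root rho_d (below_notin d ad da)) => // -[t [t_root t_rho]].
  move/lex_pref_leq => Pdt; have /lex_pref_leq Pty := y_pref t t_root t_rho.
  by rewrite (leq_trans _ y_half) // leq_mul2l (leq_trans Pdt Pty) orbT.
have Pbar_half : Pbar F a * 2 <= P F rho.
  rewrite -leq_divRL //; apply/bigmax_leqP => d /andP[ad da].
  by rewrite leq_divRL // mulnC d_half.
by rewrite mulnC (leq_trans Pbar_half) // (@leq_bigmax _ (P F) rho).
Qed.

Lemma Mf_r1_card1 r : #|Aset F| = 1 -> r1 F = Some r -> Mf F r = (/2)%R.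
Proof.
move=> A1 r1r; have [r_root _] := (r1P F r).1 r1r.
by rewrite /Mf /M_root remove_root // r1r eqxx A1.
Qed.

Lemma Mf_Aset_step a b : a \in Aset F -> b \in Aset F -> b != a -> P F b <= P F a ->
  (forall d, d \in Aset F -> P F d <= P F b \/ P F a <= P F d) ->
  Mf F a = (/2 * log2 (INR (P F a) / INR (P F b)))%R.
Proof.
move=> aA bA ba Pba gap; have ab := Aset_inT HF aA bA Pba.
rewrite Mf_Aset //; case: (card_gt1_other (Aset_remove_self aA)) => [_|[]].
  by rewrite (Pbar_Aset_step aA bA ab ba gap).
by exists b; [apply: Aset_remove | apply: ba].
Qed.

Lemma Mf_Aset_min_ge a : a \in Aset F -> (forall d, d \in Aset F -> P F a <= P F d) ->
  (/2 * log2 (2 * INR (P F a) / INR (Pstar F)) <= Mf F a)%R.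
Proof.
move=> aA a_min; have Pa_star : P F a <= Pstar F := @leq_bigmax _ (P F) a.
have Pa_gt0 := P_gt0 F a; have Pstar_gt0 := leq_trans Pa_gt0 Pa_star.
rewrite (_ : 2 * INR (P F a) = INR (2 * P F a))%R; last by rewrite mult_INR /=; lra.
rewrite Mf_Aset //; case: (card_gt1_other (Aset_remove_self aA)) => [[y yA ya]|_] /=.
  have [Pbar_gt0 _] := Pbar_Aset_remove aA yA ya.
  apply: half_log2_ratio_le => //; first by rewrite muln_gt0.
  by have := Pbar_Aset_min aA a_min yA ya; nia.
by apply: half_log2_ratio_le_half => //; rewrite ?muln_gt0 ?leq_mul2l.
Qed.

End Mechanism.

Unset Implicit Arguments.
Set Strict Implicit.

Theorem lemma1 (n : nat) (F : graph n) (HF : is_forest F) :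
  (forall x : 'I_n, Mf F x <> 0%R <-> x \in Aset F) /\
  (forall s : seq 'I_n,
     uniq s -> (forall x, (x \in s) = (x \in Aset F)) ->
     sorted (fun a b => P F a <= P F b) s ->
     onth s (size s).-1 = r1 F /\
     (size s = 1 -> forall r, r1 F = Some r -> Mf F r = (/2)%R) /\
     (2 <= size s ->
        (forall (i : nat) (a b : 'I_n), 0 < i -> onth s i = Some a -> onth s i.-1 = Some b ->
           Mf F a = (/2 * log2 (INR (P F a) / INR (P F b)))%R) /\
        (forall a1 : 'I_n, onth s 0 = Some a1 ->
           (/2 * log2 (2 * INR (P F a1) / INR (Pstar F)) <= Mf F a1 <= /2)%R))).
Proof.
split=> [x|s s_uniq s_A s_sorted]; first exact: Mf_neq0.
have onth_A j d : onth s j = Some d -> d \in Aset F.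
  by move=> sj; rewrite -s_A; apply/onthP; exists j.
have A_onth d : d \in Aset F -> exists j, onth s j = Some d by rewrite -s_A => /onthP.
split.
  case r1r: (r1 F) => [r|]; last first.
    by case sl: onth => [l|] //; have [r r1r'] := r1_exists HF l; rewrite r1r' in r1r.
  have [j sj] := A_onth r (r1_Aset r1r); have [l [sl jl]] := onth_last sj.
  by rewrite sl (Aset_P_max HF r1r (onth_A _ _ sl) (sorted_onth_leq s_sorted jl sj sl)).
split=> [s1 r r1r|_].
  apply: Mf_r1_card1 r1r; rewrite -s1 -(card_uniqP s_uniq).
  by apply: eq_card => x; rewrite s_A.
split=> [i a b i_gt0 sa sb|a1 sa1]; last first.
  split; last exact: Mf_le_half.
  apply: Mf_Aset_min_ge (onth_A _ _ sa1) _ => // d /A_onth[j sj].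
  exact: (sorted_onth_leq s_sorted (leq0n j) sa1 sj).
have ba : b != a by apply: onth_uniq_neq s_uniq _ sb sa; rewrite neq_ltn ltn_predL i_gt0.
apply: Mf_Aset_step (onth_A _ _ sa) (onth_A _ _ sb) ba _ _ => //.
  exact: (sorted_onth_leq s_sorted (leq_pred i) sb sa).
move=> d /A_onth[j sj]; case: (leqP j i.-1) => ji; [left | right].
  exact: (sorted_onth_leq s_sorted ji sj sb).
by apply: sorted_onth_leq s_sorted _ sa sj; lia.
Qed.
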